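(* Let $P$ be a continuous poset and $(T_\varepsilon)_{\varepsilon\ge0}$ a superlinear family of Scott-continuous translations satisfying TR1, TR2 and TR3. Then (i) for a persistence module $M$ over $P$, $d_a(M,0)=0$ iff $M$ is ephemeral; (ii) for a Scott sheaf $\mathcal F$ on $P^\sigma$, $d_\sigma(\mathcal F,0)=0$ iff $\mathcal F=0$.
   Context: Let $P$ be a poset (as a category, $p\to q$ iff $p\le q$). A subset is directed if nonempty and any two elements have an upper bound in it. $x\ll y$ means: for every directed $D$ whose supremum exists with $y\le\sup D$, some $d\in D$ satisfies $x\le d$. $P$ is continuous if for each $p$ the set $\{x:x\ll p\}$ is directed with supremum $p$. $U$ is Scott-open if it is an up-set meeting every directed set whose supremum exists and lies in $U$; $P^\sigma$ is $P$ with this topology. A map $f\colon P\to P$ is Scott-continuous if order-preserving and $f(\sup D)=\sup f(D)$ for directed $D$ with existing supremum. A translation is an order-preserving $T$ with $p\le T(p)$; a family $(T_\varepsilon)_{\varepsilon\ge0}$ is superlinear if $T_\varepsilon(T_\delta(p))\le T_{\varepsilon+\delta}(p)$. TR1: each $T_\varepsilon$ is an order-isomorphism. TR2: $x\ll T_\varepsilon(x)$ for all $x$ and $\varepsilon>0$. TR3: for every $p\ll q$ there is $\varepsilon>0$ with $p\le T_\varepsilon(p)\le q$. $k$ is a commutative ring with unity; persistence modules are functors from $P$ to $k$-modules; Scott sheaves are sheaves of $k$-modules on $P^\sigma$. For a persistence module, $T^*M=M\circ T$ with natural morphism $M\to T^*M$ given by $M(p\le T(p))$; for a Scott sheaf,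 $T^*\mathcal F$ is the sheaf inverse image along $T\colon P^\sigma\to P^\sigma$, with natural morphism $\mathcal F\to T^*\mathcal F$ induced on stalks by $\mathcal F_p\to\mathcal F_{T(p)}$. Objects $A,B$ are $\varepsilon$-interleaved if there are morphisms $f\colon A\to T_\varepsilon^*B$, $g\colon B\to T_\varepsilon^*A$ with $T_\varepsilon^*(g)\circ f$ and $T_\varepsilon^*(f)\circ g$ equal to the natural morphisms $A\to T_\varepsilon^*T_\varepsilon^*A$, $B\to T_\varepsilon^*T_\varepsilon^*B$. The interleaving distance is the infimum of such $\varepsilon$ ($\infty$ if none): $d_a$ for persistence modules, $d_\sigma$ for Scott sheaves. $M$ is ephemeral if $M(p\le q)=0$ for all $p\ll q$. *)

From HB Require Import structures.
From mathcomp Require Import all_boot all_order all_algebra.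
From mathcomp Require Import boolp classical_sets functions reals constructive_ereal ereal.
Set Implicit Arguments. Unset Strict Implicit. Unset Printing Implicit Defensive.
Import Order.TTheory GRing.Theory Num.Theory.
Local Open Scope classical_set_scope.
Local Open Scope order_scope.

Section Order_defs.
Context {d : Order.disp_t} {P : porderType d}.

Definition directed (D : set P) : Prop :=
  (exists x, D x) /\ forall x y, D x -> D y -> exists z, D z /\ x <= z /\ y <= z.

Definition is_sup (D : set P) (s : P) : Prop :=
  (forall x, D x -> x <= s) /\ (forall u, (forall x, D x -> x <= u) -> s <= u).

Definition way_below (x y : P) : Prop :=
  forall (D : set P) (s : P), directed D -> is_sup D s -> y <= s ->
    exists2 z, D z & x <= z.

Definition continuous_poset : Prop :=
  forall p : P, directed [set x | way_below x p] /\ is_sup [set x | way_below x p] p.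

Definition scott_open (U : set P) : Prop :=
  (forall p q, U p -> p <= q -> U q) /\
  (forall (D : set P) (s : P), directed D -> is_sup D s -> U s -> exists2 z, D z & U z).

Definition scott_continuous (f : P -> P) : Prop :=
  (forall p q, p <= q -> f p <= f q) /\
  (forall (D : set P) (s : P), directed D -> is_sup D s -> is_sup (f @` D) (f s)).

Definition order_iso (f : P -> P) : Prop :=
  (forall p q, (f p <= f q) <-> (p <= q)) /\ (forall q, exists p, f p = q).

End Order_defs.
Arguments continuous_poset {d} P.

Record translation {d : Order.disp_t} (P : porderType d) := Translation {
  tr :> P -> P;
  tr_mono : forall p q, p <= q -> tr p <= tr q;
  tr_ext : forall p, p <= tr p }.

Unset Implicit Arguments.

Section Family.
Context {R : realType} {d : Order.disp_t} {P : porderType d}.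
Variable T : R -> translation P.

Definition superlinear : Prop :=
  forall (e f : R) (p : P), (0 <= e)%R -> (0 <= f)%R -> T e (T f p) <= T (e + f)%R p.
Definition TR1 : Prop := forall e : R, (0 <= e)%R -> order_iso (T e).
Definition TR2 : Prop := forall (e : R) (x : P), (0 < e)%R -> way_below x (T e x).
Definition TR3 : Prop := forall p q : P, way_below p q ->
  exists e : R, (0 < e)%R /\ p <= T e p /\ T e p <= q.
End Family.

Record pmod (k : comPzRingType) {d : Order.disp_t} (P : porderType d) := PMod {
  pm_obj : P -> lmodType k;
  pm_map : forall p q : P, p <= q -> pm_obj p -> pm_obj q;
  pm_lin : forall p q (h : p <= q) (a : k) (x y : pm_obj p),
      pm_map p q h (a *: x + y)%R = (a *: pm_map p q h x + pm_map p q h y)%R;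
  pm_id : forall p (h : p <= p) x, pm_map p p h x = x;
  pm_comp : forall p q r (h1 : p <= q) (h2 : q <= r) (h3 : p <= r) x,
      pm_map p r h3 x = pm_map q r h2 (pm_map p q h1 x) }.
Arguments pm_obj {k d P} _ _.
Arguments pm_map {k d P} _ {p q} _ _.

Section PMod.
Context {k : comPzRingType} {d : Order.disp_t} {P : porderType d}.

Definition pzero : pmod k P.
Proof.
refine (@PMod k d P (fun _ => ('rV[k]_0 : lmodType k)) (fun _ _ _ x => x) _ _ _);
  by [].
Defined.

(** f : M -> T^* N, i.e. components M p -> N (T p), linear and natural *)
Definition is_shift_hom (T : translation P) (M N : pmod k P)
  (f : forall p, pm_obj M p -> pm_obj N (T p)) : Prop :=
  (forall p (a : k) (x y : pm_obj M p), f p (a *: x + y)%R = (a *: f p x + f p y)%R) /\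
  (forall p q (h : p <= q) (h' : T p <= T q) x,
      pm_map N h' (f p x) = f q (pm_map M h x)).

Definition pm_interleaved (T : translation P) (M N : pmod k P) : Prop :=
  exists (f : forall p, pm_obj M p -> pm_obj N (T p))
         (g : forall p, pm_obj N p -> pm_obj M (T p)),
    is_shift_hom T M N f /\ is_shift_hom T N M g /\
    (forall p (h : p <= T (T p)) x, g (T p) (f p x) = pm_map M h x) /\
    (forall p (h : p <= T (T p)) x, f (T p) (g p x) = pm_map N h x).

Definition d_a {R : realType} (T : R -> translation P) (M N : pmod k P) : \bar R :=
  ereal_inf [set (e%:E)%E | e in [set e : R | (0 <= e)%R /\ pm_interleaved (T e) M N]].

Definition ephemeral (M : pmod k P) : Prop :=
  forall p q (h : p <= q), way_below p q -> forall x, pm_map M h x = 0%R.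
End PMod.

Record scott_sheaf (k : comPzRingType) {d : Order.disp_t} (P : porderType d) := SSheaf {
  sh_obj : set P -> lmodType k;
  sh_res : forall U V : set P, V `<=` U -> sh_obj U -> sh_obj V;
  sh_lin : forall U V (h : V `<=` U) (a : k) (x y : sh_obj U),
      scott_open U -> scott_open V ->
      sh_res U V h (a *: x + y)%R = (a *: sh_res U V h x + sh_res U V h y)%R;
  sh_id : forall U (h : U `<=` U) x, scott_open U -> sh_res U U h x = x;
  sh_comp : forall U V W (h1 : V `<=` U) (h2 : W `<=` V) (h3 : W `<=` U) x,
      scott_open U -> scott_open V -> scott_open W ->
      sh_res U W h3 x = sh_res V W h2 (sh_res U V h1 x);
  sh_locality : forall (I : Type) (Ui : I -> set P) (U : set P)
      (h : forall i, Ui i `<=` U),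
      scott_open U -> (forall i, scott_open (Ui i)) -> U = \bigcup_i Ui i ->
      forall s t : sh_obj U, (forall i, sh_res U (Ui i) (h i) s = sh_res U (Ui i) (h i) t) -> s = t;
  sh_gluing : forall (I : Type) (Ui : I -> set P) (U : set P)
      (h : forall i, Ui i `<=` U),
      scott_open U -> (forall i, scott_open (Ui i)) -> U = \bigcup_i Ui i ->
      forall s : forall i, sh_obj (Ui i),
      (forall i j (hi : Ui i `&` Ui j `<=` Ui i) (hj : Ui i `&` Ui j `<=` Ui j),
          sh_res (Ui i) (Ui i `&` Ui j) hi (s i) = sh_res (Ui j) (Ui i `&` Ui j) hj (s j)) ->
      exists t : sh_obj U, forall i, sh_res U (Ui i) (h i) t = s i }.
Arguments sh_obj {k d P} _ _.
Arguments sh_res {k d P} _ {U V} _ _.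

Section Sheaf.
Context {k : comPzRingType} {d : Order.disp_t} {P : porderType d}.

Definition szero : scott_sheaf k P.
Proof.
refine (@SSheaf k d P (fun _ => ('rV[k]_0 : lmodType k)) (fun _ _ _ x => x)
          _ _ _ _ _) => //.
- by move=> *; apply/rowP => -[].
- by move=> *; exists 0%R => i; apply/rowP => -[].
Defined.

(** f : A -> T^* B.  Since T is an order isomorphism (TR1), hence a
    homeomorphism of P^sigma, (T^* B)(U) = B(T(U)). *)
Definition is_sshift_hom (T : translation P) (A B : scott_sheaf k P)
  (f : forall U : set P, sh_obj A U -> sh_obj B (T @` U)) : Prop :=
  (forall U (a : k) (x y : sh_obj A U), scott_open U ->
      f U (a *: x + y)%R = (a *: f U x + f U y)%R) /\
  (forall U V (h : V `<=` U) (h' : T @` V `<=` T @` U) x,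
      scott_open U -> scott_open V ->
      sh_res B h' (f U x) = f V (sh_res A h x)).

Definition sh_interleaved (T : translation P) (A B : scott_sheaf k P) : Prop :=
  exists (f : forall U : set P, sh_obj A U -> sh_obj B (T @` U))
         (g : forall U : set P, sh_obj B U -> sh_obj A (T @` U)),
    is_sshift_hom T A B f /\ is_sshift_hom T B A g /\
    (forall U (h : T @` (T @` U) `<=` U) x, scott_open U ->
        g (T @` U) (f U x) = sh_res A h x) /\
    (forall U (h : T @` (T @` U) `<=` U) x, scott_open U ->
        f (T @` U) (g U x) = sh_res B h x).

Definition d_sigma {R : realType} (T : R -> translation P) (A B : scott_sheaf k P)
  : \bar R :=
  ereal_inf [set (e%:E)%E | e in [set e : R | (0 <= e)%R /\ sh_interleaved (T e) A B]].

Definition sheaf_is_zero (F : scott_sheaf k P) : Prop :=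
  forall U, scott_open U -> forall x : sh_obj F U, x = 0%R.
End Sheaf.

(** Both distances vanish iff [e]-interleavings with zero exist for arbitrarily
    small [e >= 0].  An [e]-interleaving with zero forces the structure maps
    [p <= T_e (T_e p)] (resp. the restrictions to [T_e (T_e U)]) to vanish, since
    they factor through zero.  By TR3 and superlinearity, every [p << q] satisfies
    [T_e (T_e p) <= q] for all small [e]; for modules this gives ephemerality, and
    for sheaves, since a Scott-open [U] is covered by the open sets [T_e (T_e U)]
    (continuity of [P] and TR1), locality gives [F = 0].  Conversely, by TR2 an
    ephemeral module is [e]-interleaved with zero for every [e > 0], and the zero
    sheaf is [0]-interleaved with zero. *)
From HB Require Import structures.
From mathcomp Require Import all_boot all_order all_algebra.
From mathcomp Require Import boolp classical_sets functions reals constructive_ereal ereal.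
Import Order.TTheory GRing.Theory Num.Theory.
Local Open Scope classical_set_scope.

Lemma linear_map0 (k : comPzRingType) (U V : lmodType k) (f : U -> V) :
  linear f -> f 0%R = 0%R.
Proof.
by move=> flin; have := flin (-1)%R 0%R 0%R; rewrite scaler0 addr0 scaleN1r addNr.
Qed.

Lemma ereal_inf_nonneg_eq0P (R : realType) (Q : R -> Prop) :
  ereal_inf [set (e%:E)%E | e in [set e : R | (0 <= e)%R /\ Q e]] = 0%E <->
  forall eps : R, (0 < eps)%R -> exists e, [/\ (0 <= e)%R, Q e & (e < eps)%R].
Proof.
split=> [inf0 eps eps0 | small].
  have /ereal_inf_lt[_ [e [e0 Qe] <-]] : (ereal_inf
      [set (e%:E)%E | e in [set e : R | (0 <= e)%R /\ Q e]] < eps%:E)%E.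
    by rewrite inf0 lte_fin.
  by rewrite lte_fin => lt_e_eps; exists e.
apply/eqP; rewrite eq_le; apply/andP; split.
  apply/lee_addgt0Pr => eps eps0; rewrite add0e.
  have [e [e0 Qe lt_e_eps]] := small eps eps0.
  apply: le_trans (ereal_inf_lbound _) _; first by exists e.
  by rewrite lee_fin ltW.
by apply: le_ereal_inf_tmp => _ [e [e0 _] <-]; rewrite lee_fin.
Qed.

Section ScottTopology.
Context {d : Order.disp_t} {P : porderType d}.

Lemma way_below_le_trans (x y z : P) : way_below x y -> (y <= z)%O -> way_below x z.
Proof. by move=> xy yz D s dD sD zs; apply: (xy D s dD sD); apply: le_trans yz zs. Qed.

Lemma scott_open_image_sub (S : translation P) (U : set P) :
  scott_open U -> S @` U `<=` U.
Proof. by move=> [Uup _] _ [u Uu <-]; apply: Uup Uu (tr_ext _ _). Qed.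

Lemma order_iso_scott_open {f : P -> P} {U : set P} :
  order_iso f -> scott_open U -> scott_open (f @` U).
Proof.
move=> [fle fsurj] [Uup Udir]; split.
  move=> _ q [u Uu <-]; have [v <-] := fsurj q => le_fu_fv.
  by exists v => //; apply: Uup Uu _; apply/fle.
move=> D s [[z Dz] dD] [Dub Dleast] [u Uu fus].
pose D' := [set x | D (f x)].
have D'dir : directed D'.
  split; first by have [w fw] := fsurj z; exists w; rewrite /D' /= fw.
  move=> x y Dx Dy; have [z' [Dz' [xz yz]]] := dD _ _ Dx Dy.
  have [w fw] := fsurj z'; exists w; rewrite /D' /= fw.
  by split=> //; split; apply/fle; rewrite fw.
have D'sup : is_sup D' u.
  split=> [x Dx | v ub]; apply/fle; rewrite fus; first exact: Dub.
  apply: Dleast => z' Dz'; have [w fw] := fsurj z'.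
  by rewrite -fw; apply/fle; apply: ub; rewrite /D' /= fw.
have [w Dw Uw] := Udir _ _ D'dir D'sup Uu.
by exists (f w) => //; exists w.
Qed.

End ScottTopology.

Section Translations.
Context {R : realType} {d : Order.disp_t} {P : porderType d}.
Context {T : R -> translation P}.
Hypothesis T_superlinear : superlinear T.

Lemma superlinear_le_param (a b : R) (p : P) :
  (0 <= a)%R -> (a <= b)%R -> (T a p <= T b p)%O.
Proof.
move=> a0 ab; have := T_superlinear (b - a)%R a p.
rewrite subrK subr_ge0 => /(_ ab a0).
exact/le_trans/tr_ext.
Qed.

Lemma way_below_double_shift {p q : P} : TR3 T -> way_below p q ->
  exists2 eps : R, (0 < eps)%R &
    forall e : R, (0 <= e)%R -> (e < eps)%R -> (T e (T e p) <= q)%O.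
Proof.
move=> tr3 /tr3[eps [eps0 [_ Tpq]]]; exists (eps / 2)%R; first by rewrite divr_gt0.
move=> e e0 e_lt; apply: le_trans (T_superlinear e e p e0 e0) _; apply: le_trans Tpq.
apply: superlinear_le_param; first by rewrite addr_ge0.
by rewrite (splitr eps) ltW // ltrD.
Qed.

Lemma scott_open_double_shift_cover {U : set P} {p : P} :
  continuous_poset P -> TR1 T -> TR3 T -> scott_open U -> U p ->
  exists2 eps : R, (0 < eps)%R &
    forall e : R, (0 <= e)%R -> (e < eps)%R -> (T e @` (T e @` U)) p.
Proof.
move=> cP tr1 tr3 Uo Up; have [wb_dir wb_sup] := cP p.
have [z z_p Uz] := Uo.2 _ _ wb_dir wb_sup Up.
have [eps eps0 TTz_le] := way_below_double_shift tr3 z_p.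
exists eps => // e e0 e_lt; have [Tle Tsurj] := tr1 e e0.
have [p1 Tp1] := Tsurj p; have [u Tu] := Tsurj p1.
exists p1 => //; exists u => //; apply: Uo.1 Uz _.
by apply/(Tle z u)/(Tle (T e z)); rewrite Tu Tp1; apply: TTz_le.
Qed.

End Translations.

Section PersistenceModules.
Context {k : comPzRingType} {d : Order.disp_t} {P : porderType d}.
Implicit Types (M : pmod k P) (S : translation P).

Lemma pm_map0 M (p q : P) (h : (p <= q)%O) : pm_map M h 0%R = 0%R.
Proof. by apply: linear_map0 => a x y; apply: pm_lin. Qed.

Lemma pm_map_eq0_le {M} {p r q : P} (hr : (p <= r)%O) (hq : (p <= q)%O) x :
  (r <= q)%O -> pm_map M hr x = 0%R -> pm_map M hq x = 0%R.
Proof. by move=> rq x0; rewrite (pm_comp _ _ M _ _ _ hr rq) x0 pm_map0. Qed.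

Lemma pm_interleaved_pzero_map0 {S M} : pm_interleaved S M pzero ->
  forall p (h : (p <= S (S p))%O) x, pm_map M h x = 0%R.
Proof.
move=> [f [g [_ [[glin _] [gf _]]]]] p h x.
by rewrite -gf (thinmx0 (f p x)); apply: linear_map0; apply: glin.
Qed.

Lemma ephemeral_pm_interleaved_pzero S M : (forall p, way_below p (S p)) ->
  ephemeral M -> pm_interleaved S M pzero.
Proof.
move=> S_wb eph; exists (fun p _ => 0%R), (fun p _ => 0%R).
split; first by split=> *; apply/rowP => -[].
split; first by split=> *; [rewrite scaler0 addr0 | rewrite pm_map0].
split=> [p h x | *]; last by apply/rowP => -[].
by apply/esym/eph; apply: way_below_le_trans (S_wb p) (tr_ext _ _).
Qed.

Lemma d_a_pzero_eq0P {R : realType} (T : R -> translation P) M :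
  superlinear T -> TR2 T -> TR3 T -> d_a T M pzero = 0%E <-> ephemeral M.
Proof.
move=> sl tr2 tr3; rewrite /d_a ereal_inf_nonneg_eq0P; split=> [small | eph].
  move=> p q h /(way_below_double_shift sl tr3)[eps eps0 TTp_le] x.
  have [e [e0 Me lt_e]] := small eps eps0.
  have h' : (p <= T e (T e p))%O by apply/(le_trans (tr_ext _ p))/tr_ext.
  apply: (pm_map_eq0_le h' _ _ (TTp_le e e0 lt_e)).
  exact: (pm_interleaved_pzero_map0 Me _ h').
move=> eps eps0; exists (eps / 2)%R; split; rewrite ?divr_ge0 ?ltW //.
  by apply: ephemeral_pm_interleaved_pzero => // p; apply: tr2; rewrite divr_gt0.
by rewrite ltr_pdivrMr // ltr_pMr // ltr1n.
Qed.

End PersistenceModules.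

Section ScottSheaves.
Context {k : comPzRingType} {d : Order.disp_t} {P : porderType d}.
Implicit Types (F : scott_sheaf k P) (S : translation P).

Lemma sh_res0 {F} {U V : set P} (h : V `<=` U) :
  scott_open U -> scott_open V -> sh_res F h 0%R = 0%R.
Proof. by move=> Uo Vo; apply: linear_map0 => a x y; apply: sh_lin. Qed.

Lemma sh_interleaved_szero_res0 {S F} {U : set P} : order_iso S ->
  sh_interleaved S F szero -> scott_open U ->
  forall (h : S @` (S @` U) `<=` U) x, sh_res F h x = 0%R.
Proof.
move=> Siso [f [g [_ [[glin _] [gf _]]]]] Uo h x.
have SUo := order_iso_scott_open Siso Uo.
by rewrite -gf // (thinmx0 (f U x)); apply: linear_map0 => a y z; apply: glin.
Qed.

Lemma sheaf_is_zero_sh_interleaved S F : order_iso S ->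
  sheaf_is_zero F -> sh_interleaved S F szero.
Proof.
move=> Siso F0; exists (fun U _ => 0%R), (fun U _ => 0%R).
split; first by split=> *; apply/rowP => -[].
split; first by split=> U *; [rewrite scaler0 addr0 | apply/F0/order_iso_scott_open].
split=> [U h x Uo | *]; last by apply/rowP => -[].
by apply/esym/F0; do 2 apply: (order_iso_scott_open Siso).
Qed.

Lemma d_sigma_szero_eq0P {R : realType} (T : R -> translation P) F :
  continuous_poset P -> superlinear T -> TR1 T -> TR3 T ->
  d_sigma T F szero = 0%E <-> sheaf_is_zero F.
Proof.
move=> cP sl tr1 tr3; rewrite /d_sigma ereal_inf_nonneg_eq0P.
split=> [small U Uo x | F0 eps eps0]; last first.
  by exists 0%R; split=> //; apply: sheaf_is_zero_sh_interleaved (tr1 _ _) F0.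
pose I := {e : R | (0 <= e)%R /\ sh_interleaved (T e) F szero}.
pose Ui (i : I) := T (sval i) @` (T (sval i) @` U).
have Ui_sub i : Ui i `<=` U.
  have TU_sub := scott_open_image_sub (T (sval i)) U Uo.
  exact: subset_trans (image_subset _ TU_sub) TU_sub.
have Ui_open i : scott_open (Ui i).
  by have [e0 _] := svalP i; do 2 apply: (order_iso_scott_open (tr1 _ e0)).
have U_cover : U = \bigcup_i Ui i.
  apply/seteqP; split=> [p Up | p [i _]]; last exact: Ui_sub.
  have [eps eps0 TTU_p] := scott_open_double_shift_cover sl cP tr1 tr3 Uo Up.
  have [e [e0 Fe lt_e]] := small eps eps0.
  by exists (exist _ e (conj e0 Fe)) => //; apply: TTU_p.
apply: (sh_locality _ _ F _ _ _ Ui_sub Uo Ui_open U_cover) => -[e [e0 Fe]].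
rewrite (sh_res0 _ Uo (Ui_open _)).
exact: sh_interleaved_szero_res0 (tr1 e e0) Fe Uo _ x.
Qed.

End ScottSheaves.

Theorem mainTheorem20 (R : realType) (k : comPzRingType) (d : Order.disp_t)
  (P : porderType d) (T : R -> translation P) :
  continuous_poset P ->
  superlinear T ->
  (forall e : R, (0 <= e)%R -> scott_continuous (T e)) ->
  TR1 T -> TR2 T -> TR3 T ->
  (forall M : pmod k P, d_a T M pzero = 0%E <-> ephemeral M) /\
  (forall F : scott_sheaf k P, d_sigma T F szero = 0%E <-> sheaf_is_zero F).
Proof.
move=> cP sl _ tr1 tr2 tr3; split=> [M | F].
  exact: d_a_pzero_eq0P.
exact: d_sigma_szero_eq0P.
Qed.
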